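(* Let $\succeq$ be an inconsistency ranking on $\mathcal{A}$. Then $\succeq$ satisfies positive responsiveness (PR), invariance under inversion of preferences (IIP), homogeneous treatment of entities (HTE), scale invariance (SI), monotonicity (MON) and reducibility (RED) if and only if $\succeq$ equals the Koczkodaj inconsistency ranking $\succeq^K$. In other words, $\succeq^K$ satisfies all six properties, and it is the unique inconsistency ranking on $\mathcal{A}$ that does so.
   Context: A pairwise comparison matrix of size $n$ is a matrix $\mathbf{A}=[a_{ij}]\in\mathbb{R}^{n\times n}$ with all entries positive and $a_{ji}=1/a_{ij}$ for all $i,j$. Let $\mathcal{A}$ denote the set of all pairwise comparison matrices of all sizes $n\ge 3$. For $\mathbf{A}\in\mathcal{A}$ of size $n$ and $3\le m\le n$, a submatrix of $\mathbf{A}$ is a matrix $\mathbf{B}=[b_{ij}]$ of size $m$ with $b_{ij}=a_{\sigma(i)\sigma(j)}$ for some strictly increasing map $\sigma:\{1,\dots,m\}\to\{1,\dots,n\}$. A triad is a pairwise comparison matrix of size $3$; a triad of $\mathbf{A}$ is a submatrix of $\mathbf{A}$ of size $3$ (when $n=3$, $\mathbf{A}$ is its own unique triad). A triad $\mathbf{T}$ is written $\mathbf{T}=(t_1;t_2;t_3)$, meaning $t_{12}=t_1$, $t_{13}=t_2$, $t_{23}=t_3$ (the remaining entries are determined by reciprocity); $\mathbf{T}^\top$ denotes its transpose, i.e. the triad $(1/t_1;1/t_2;1/t_3)$. An inconsistency ranking is a complete and transitive binary relation $\succeq$ on $\mathcal{A}$ ($\mathbf{A}\succeq\mathbf{B}$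 is read ''$\mathbf{A}$ is at most as inconsistent as $\mathbf{B}$''); $\mathbf{A}\sim\mathbf{B}$ means $\mathbf{A}\succeq\mathbf{B}$ and $\mathbf{B}\succeq\mathbf{A}$; $\mathbf{A}\succ\mathbf{B}$ means $\mathbf{A}\succeq\mathbf{B}$ and not $\mathbf{B}\succeq\mathbf{A}$; $\mathbf{A}\preceq\mathbf{B}$ means $\mathbf{B}\succeq\mathbf{A}$. For $\mathbf{A}=[a_{ij}]\in\mathcal{A}$ of size $n$ let $\mu(\mathbf{A})=\max_{1\le i<j<k\le n}\max\{a_{ij}a_{jk}/a_{ik},\ a_{ik}/(a_{ij}a_{jk})\}$. The Koczkodaj inconsistency ranking $\succeq^K$ is defined by $\mathbf{A}\succeq^K\mathbf{B}\iff\mu(\mathbf{A})\le\mu(\mathbf{B})$. Properties of an inconsistency ranking $\succeq$: (PR) for all $s_2,t_2\ge 1$: $(1;s_2;1)\succeq(1;t_2;1)\iff s_2\le t_2$. (IIP) $\mathbf{T}\sim\mathbf{T}^\top$ for every triad $\mathbf{T}$. (HTE) $(1;t_2;t_3)\sim(1;t_2/t_3;1)$ for all $t_2,t_3>0$. (SI) $(t_1;t_2;t_3)\sim(kt_1;k^2t_2;kt_3)$ for all $t_1,t_2,t_3>0$ and all $k>0$. (MON) $\mathbf{A}\preceq\mathbf{T}$ for every $\mathbf{A}\in\mathcal{A}$ and every triad $\mathbf{T}$ of $\mathbf{A}$. (RED) every $\mathbf{A}\in\mathcal{A}$ has a triad $\mathbf{T}$ with $\mathbf{A}\sim\mathbf{T}$.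 *)

From Stdlib Require Import Reals List Arith.
Import ListNotations.
Open Scope R_scope.

(** A pairwise comparison matrix of size n >= 3, stored as a function
    nat -> nat -> R using 0-based indices 0..n-1.  Entries outside the
    index range are normalised to 1 so that each matrix has a unique
    representation. *)
Record PCM : Type := mkPCM {
  psize : nat;
  pent : nat -> nat -> R;
  psize_ge3 : (3 <= psize)%nat;
  pent_pos : forall i j, (i < psize)%nat -> (j < psize)%nat -> 0 < pent i j;
  pent_recip : forall i j, (i < psize)%nat -> (j < psize)%nat ->
      pent j i = / pent i j;
  pent_out : forall i j, (psize <= i \/ psize <= j)%nat -> pent i j = 1
}.

Definition is_submatrix (B A : PCM) : Prop :=
  (psize B <= psize A)%nat /\
  exists sigma : nat -> nat,
    (forall i j, (i < j)%nat -> (j < psize B)%nat -> (sigma i < sigma j)%nat) /\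
    (forall i, (i < psize B)%nat -> (sigma i < psize A)%nat) /\
    (forall i j, (i < psize B)%nat -> (j < psize B)%nat ->
       pent B i j = pent A (sigma i) (sigma j)).

(** T is the triad (t1;t2;t3): size 3, t12 = t1, t13 = t2, t23 = t3
    (0-based: entries (0,1), (0,2), (1,2)). *)
Definition is_triad (T : PCM) (t1 t2 t3 : R) : Prop :=
  psize T = 3%nat /\ pent T 0 1 = t1 /\ pent T 0 2 = t2 /\ pent T 1 2 = t3.

Definition triad_of (T A : PCM) : Prop :=
  psize T = 3%nat /\ is_submatrix T A.

(** An inconsistency ranking: complete and transitive relation on PCMs.
    rk A B reads "A is at most as inconsistent as B". *)
Definition inconsistency_ranking (rk : PCM -> PCM -> Prop) : Prop :=
  (forall A B, rk A B \/ rk B A) /\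
  (forall A B C, rk A B -> rk B C -> rk A C).

Definition rk_equiv (rk : PCM -> PCM -> Prop) (A B : PCM) : Prop :=
  rk A B /\ rk B A.

Definition tri_val (a : nat -> nat -> R) (i j k : nat) : R :=
  Rmax (a i j * a j k / a i k) (a i k / (a i j * a j k)).

Definition triples (n : nat) : list (nat * nat * nat) :=
  flat_map (fun i => flat_map (fun j => map (fun k => (i, j, k))
      (seq (S j) (n - S j))) (seq (S i) (n - S i))) (seq 0 n).

(** mu(A) = max over i<j<k of tri_val; the fold starts at 1, which is
    harmless since every tri_val is >= 1 and the list is nonempty (n >= 3). *)
Definition mu (A : PCM) : R :=
  fold_right Rmax 1
    (map (fun t => match t with (i, j, k) => tri_val (pent A) i j k end)
         (triples (psize A))).

Definition koczkodaj_ranking (A B : PCM) : Prop := mu A <= mu B.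

Definition PR (rk : PCM -> PCM -> Prop) : Prop :=
  forall (s2 t2 : R) (S T : PCM), 1 <= s2 -> 1 <= t2 ->
    is_triad S 1 s2 1 -> is_triad T 1 t2 1 -> (rk S T <-> s2 <= t2).

Definition IIP (rk : PCM -> PCM -> Prop) : Prop :=
  forall (t1 t2 t3 : R) (T T' : PCM),
    is_triad T t1 t2 t3 -> is_triad T' (/ t1) (/ t2) (/ t3) -> rk_equiv rk T T'.

Definition HTE (rk : PCM -> PCM -> Prop) : Prop :=
  forall (t2 t3 : R) (T T' : PCM), 0 < t2 -> 0 < t3 ->
    is_triad T 1 t2 t3 -> is_triad T' 1 (t2 / t3) 1 -> rk_equiv rk T T'.

Definition SI (rk : PCM -> PCM -> Prop) : Prop :=
  forall (t1 t2 t3 k : R) (T T' : PCM), 0 < t1 -> 0 < t2 -> 0 < t3 -> 0 < k ->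
    is_triad T t1 t2 t3 -> is_triad T' (k * t1) (k * k * t2) (k * t3) ->
    rk_equiv rk T T'.

Definition MON (rk : PCM -> PCM -> Prop) : Prop :=
  forall A T : PCM, triad_of T A -> rk T A.

Definition RED (rk : PCM -> PCM -> Prop) : Prop :=
  forall A : PCM, exists T : PCM, triad_of T A /\ rk_equiv rk A T.

(* Koczkodaj's index of a matrix is the largest index of its triads, so under MON and RED a
   ranking is determined by how it compares triads.  SI with k = 1/t1 and then HTE move the
   triad (t1;t2;t3) to the equivalent (1;y;1) with y = t2/(t1 t3), and IIP replaces y by 1/y
   if needed; so every triad T is equivalent to (1;mu(T);1), and PR then orders triads by mu.
   For a matrix A equivalent to one of its triads T, MON applied to a triad attaining mu(A)
   shows mu(T) = mu(A). *)

From Stdlib Require Import Reals Lra Lia List Psatz.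
Import ListNotations.
Open Scope R_scope.

Lemma fold_Rmax_ge d l x : In x l -> x <= fold_right Rmax d l.
Proof.
  induction l as [|a l IH]; simpl; intros Hx; [contradiction|].
  destruct Hx as [<-|Hx]; [apply Rmax_l|].
  eapply Rle_trans; [apply IH; auto | apply Rmax_r].
Qed.

Lemma fold_Rmax_In d l :
  (forall x, In x l -> d <= x) -> l <> nil -> In (fold_right Rmax d l) l.
Proof.
  induction l as [|a [|b l] IH]; intros Hd Hnil; [congruence| |].
  - left; simpl; symmetry; apply Rmax_left, Hd; left; auto.
  - apply (Rmax_case a (fold_right Rmax d (b :: l)) (fun r => In r (a :: b :: l))).
    + left; auto.
    + right; apply IH; [intros; apply Hd; right; auto | discriminate].
Qed.

Lemma Rmax_inv_ge1 u : 0 < u -> 1 <= Rmax u (/ u).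
Proof.
  intros Hu; destruct (Rle_dec 1 u).
  - eapply Rle_trans; [|apply Rmax_l]; lra.
  - eapply Rle_trans; [|apply Rmax_r].
    apply Rmult_le_reg_l with u; auto; rewrite Rinv_r; lra.
Qed.

Lemma Rmax_inv_l s : 1 <= s -> Rmax (/ s) s = s.
Proof.
  intros Hs; apply Rmax_right.
  assert (/ s <= 1) by (rewrite <- Rinv_1; apply Rinv_le_contravar; lra); lra.
Qed.

Lemma In_triples n i j k :
  In (i, j, k) (triples n) <-> (i < j < k)%nat /\ (k < n)%nat.
Proof.
  unfold triples; split.
  - intros H.
    apply in_flat_map in H as [i' [Hi H]]; apply in_flat_map in H as [j' [Hj H]].
    apply in_map_iff in H as [k' [Ht Hk]]; injection Ht as <- <- <-.
    apply in_seq in Hi, Hj, Hk; lia.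
  - intros Hijk.
    apply in_flat_map; exists i; split; [apply in_seq; lia|].
    apply in_flat_map; exists j; split; [apply in_seq; lia|].
    apply in_map_iff; exists k; split; [reflexivity | apply in_seq; lia].
Qed.


Definition triad_index (t1 t2 t3 : R) : R := Rmax (t1 * t3 / t2) (t2 / (t1 * t3)).

Lemma triad_index_inv t1 t2 t3 : 0 < t1 -> 0 < t2 -> 0 < t3 ->
  triad_index (/ t1) (/ t2) (/ t3) = triad_index t1 t2 t3.
Proof.
  intros; unfold triad_index; rewrite Rmax_comm; f_equal; field; lra.
Qed.

Lemma triad_index_unit_entity t2 t3 : 0 < t2 -> 0 < t3 ->
  triad_index 1 t2 t3 = triad_index 1 (t2 / t3) 1.
Proof. intros; unfold triad_index; f_equal; field; lra. Qed.

Lemma triad_index_scale t1 t2 t3 k : 0 < t1 -> 0 < t2 -> 0 < t3 -> 0 < k ->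
  triad_index (k * t1) (k * k * t2) (k * t3) = triad_index t1 t2 t3.
Proof. intros; unfold triad_index; f_equal; field; lra. Qed.

Lemma triad_index_centred s : 1 <= s -> triad_index 1 s 1 = s.
Proof.
  intros Hs; unfold triad_index.
  replace (1 * 1 / s) with (/ s) by (field; lra).
  replace (s / (1 * 1)) with s by (field; lra).
  now apply Rmax_inv_l.
Qed.

Lemma tri_val_ge1 (A : PCM) i j k :
  (i < psize A)%nat -> (j < psize A)%nat -> (k < psize A)%nat ->
  1 <= tri_val (pent A) i j k.
Proof.
  intros Hi Hj Hk; unfold tri_val.
  pose proof (pent_pos A i j Hi Hj); pose proof (pent_pos A j k Hj Hk);
  pose proof (pent_pos A i k Hi Hk).
  replace (pent A i k / (pent A i j * pent A j k))
    with (/ (pent A i j * pent A j k / pent A i k)) by (field; nra).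
  apply Rmax_inv_ge1, Rdiv_lt_0_compat; nra.
Qed.

Lemma mu_ge_tri_val (A : PCM) i j k :
  (i < j < k)%nat -> (k < psize A)%nat -> tri_val (pent A) i j k <= mu A.
Proof.
  intros; apply fold_Rmax_ge, in_map_iff; exists (i, j, k).
  split; [reflexivity | apply In_triples; auto].
Qed.

Lemma mu_ge1 A : 1 <= mu A.
Proof.
  pose proof (psize_ge3 A).
  eapply Rle_trans; [apply (tri_val_ge1 A 0 1 2) | apply mu_ge_tri_val]; lia.
Qed.

Lemma mu_attained (A : PCM) : exists i j k,
  (i < j < k)%nat /\ (k < psize A)%nat /\ mu A = tri_val (pent A) i j k.
Proof.
  pose proof (psize_ge3 A) as H3.
  set (f := fun t : nat * nat * nat => let '(i, j, k) := t in tri_val (pent A) i j k).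
  assert (Hin : In (mu A) (map f (triples (psize A)))).
  { apply fold_Rmax_In.
    - intros x Hx; apply in_map_iff in Hx as [[[i j] k] [<- Ht]].
      apply In_triples in Ht; apply tri_val_ge1; lia.
    - intros Hnil.
      assert (H012 : In (0, 1, 2)%nat (triples (psize A))) by (apply In_triples; lia).
      apply (in_map f) in H012; rewrite Hnil in H012; contradiction. }
  apply in_map_iff in Hin as [[[i j] k] [Hf Ht]]; apply In_triples in Ht.
  exists i, j, k; intuition.
Qed.

Lemma mu_triad T t1 t2 t3 : is_triad T t1 t2 t3 -> mu T = triad_index t1 t2 t3.
Proof.
  intros (Hs & <- & <- & <-); unfold mu; rewrite Hs; cbn.
  apply Rmax_left, tri_val_ge1; lia.
Qed.

Lemma triad_pos T t1 t2 t3 : is_triad T t1 t2 t3 -> 0 < t1 /\ 0 < t2 /\ 0 < t3.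
Proof. intros (Hs & <- & <- & <-); repeat split; apply pent_pos; lia. Qed.

Lemma is_triad_pent T : psize T = 3%nat -> is_triad T (pent T 0 1) (pent T 0 2) (pent T 1 2).
Proof. repeat split; auto. Qed.

Lemma pent_diag (A : PCM) i : (i < psize A)%nat -> pent A i i = 1.
Proof.
  intros Hi; pose proof (pent_recip A i i Hi Hi) as Hr; pose proof (pent_pos A i i Hi Hi).
  assert (pent A i i * pent A i i = 1) by (rewrite Hr at 2; apply Rinv_r; lra).
  nra.
Qed.


Definition triad_entries (a b c : R) (i j : nat) : R :=
  match i, j with
  | O, S O => a | O, S (S O) => b | S O, S (S O) => c
  | S O, O => / a | S (S O), O => / b | S (S O), S O => / c
  | _, _ => 1
  end.

Lemma triad_entries_pos a b c : 0 < a -> 0 < b -> 0 < c ->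
  forall i j, (i < 3)%nat -> (j < 3)%nat -> 0 < triad_entries a b c i j.
Proof.
  intros; destruct i as [|[|[|i]]]; try lia; destruct j as [|[|[|j]]]; try lia;
    simpl; try apply Rinv_0_lt_compat; auto; lra.
Qed.

Lemma triad_entries_recip a b c : forall i j, (i < 3)%nat -> (j < 3)%nat ->
  triad_entries a b c j i = / triad_entries a b c i j.
Proof.
  intros; destruct i as [|[|[|i]]]; try lia; destruct j as [|[|[|j]]]; try lia;
    simpl; now rewrite ?Rinv_inv, ?Rinv_1.
Qed.

Lemma triad_entries_out a b c : forall i j, (3 <= i \/ 3 <= j)%nat ->
  triad_entries a b c i j = 1.
Proof. intros; destruct i as [|[|[|i]]]; destruct j as [|[|[|j]]]; simpl; auto; lia. Qed.

Definition mk_triad a b c (ha : 0 < a) (hb : 0 < b) (hc : 0 < c) : PCM :=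
  mkPCM 3 (triad_entries a b c) (Nat.le_refl 3) (triad_entries_pos a b c ha hb hc)
    (triad_entries_recip a b c) (triad_entries_out a b c).

Lemma triad_exists a b c : 0 < a -> 0 < b -> 0 < c -> exists T, is_triad T a b c.
Proof. intros ha hb hc; exists (mk_triad a b c ha hb hc); repeat split. Qed.

Lemma triad_of_indices (A : PCM) i j k : (i < j < k)%nat -> (k < psize A)%nat ->
  exists T, triad_of T A /\ is_triad T (pent A i j) (pent A i k) (pent A j k).
Proof.
  intros Hijk Hk.
  exists (mk_triad _ _ _ (pent_pos A i j ltac:(lia) ltac:(lia))
     (pent_pos A i k ltac:(lia) ltac:(lia)) (pent_pos A j k ltac:(lia) ltac:(lia))).
  split; [|repeat split].
  split; [reflexivity|]; split; [simpl; lia|].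
  exists (fun t => match t with 0 => i | 1 => j | _ => k end%nat); simpl.
  split; [|split].
  - intros t u Htu Hu; destruct t as [|[|[|t]]]; destruct u as [|[|[|u]]]; lia.
  - intros t Ht; destruct t as [|[|[|t]]]; lia.
  - intros t u Ht Hu; destruct t as [|[|[|t]]]; try lia; destruct u as [|[|[|u]]]; try lia;
      simpl; first [reflexivity | symmetry; apply pent_diag; lia
                   | symmetry; apply pent_recip; lia].
Qed.

Lemma mu_triad_of_le T A : triad_of T A -> mu T <= mu A.
Proof.
  intros (Hs & _ & sg & Hinc & Hrange & Hent).
  rewrite (mu_triad T _ _ _ (is_triad_pent T Hs)), !Hent by lia.
  apply mu_ge_tri_val; [split|]; try apply Hinc; try apply Hrange; lia.
Qed.

Lemma triad_of_attaining_mu A : exists U, triad_of U A /\ mu U = mu A.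
Proof.
  destruct (mu_attained A) as (i & j & k & Hijk & Hk & Hmu).
  destruct (triad_of_indices A i j k Hijk Hk) as [U [HU HUt]].
  exists U; split; auto; now rewrite (mu_triad _ _ _ _ HUt), Hmu.
Qed.

Section KoczkodajProperties.

Variable rk : PCM -> PCM -> Prop.
Hypothesis rk_koczkodaj : forall A B, rk A B <-> koczkodaj_ranking A B.

Lemma rk_equiv_mu A B : rk_equiv rk A B <-> mu A = mu B.
Proof. unfold rk_equiv, koczkodaj_ranking in *; rewrite !rk_koczkodaj; lra. Qed.

Lemma koczkodaj_PR : PR rk.
Proof.
  intros s2 t2 S T Hs Ht HS HT; rewrite rk_koczkodaj; unfold koczkodaj_ranking.
  rewrite (mu_triad _ _ _ _ HS), (mu_triad _ _ _ _ HT), !triad_index_centred by auto.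
  reflexivity.
Qed.

Lemma koczkodaj_IIP : IIP rk.
Proof.
  intros t1 t2 t3 T T' HT HT'; apply rk_equiv_mu.
  destruct (triad_pos _ _ _ _ HT) as (? & ? & ?).
  rewrite (mu_triad _ _ _ _ HT), (mu_triad _ _ _ _ HT'), triad_index_inv; auto.
Qed.

Lemma koczkodaj_HTE : HTE rk.
Proof.
  intros t2 t3 T T' ? ? HT HT'; apply rk_equiv_mu.
  rewrite (mu_triad _ _ _ _ HT), (mu_triad _ _ _ _ HT'); apply triad_index_unit_entity; auto.
Qed.

Lemma koczkodaj_SI : SI rk.
Proof.
  intros t1 t2 t3 k T T' ? ? ? ? HT HT'; apply rk_equiv_mu.
  rewrite (mu_triad _ _ _ _ HT), (mu_triad _ _ _ _ HT'), triad_index_scale; auto.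
Qed.

Lemma koczkodaj_MON : MON rk.
Proof. intros A T HT; apply rk_koczkodaj, mu_triad_of_le, HT. Qed.

Lemma koczkodaj_RED : RED rk.
Proof.
  intros A; destruct (triad_of_attaining_mu A) as [U [HU Hmu]].
  exists U; split; auto; apply rk_equiv_mu; auto.
Qed.

End KoczkodajProperties.

Section Characterisation.

Variable rk : PCM -> PCM -> Prop.
Hypothesis rk_ranking : inconsistency_ranking rk.
Hypotheses (rk_PR : PR rk) (rk_IIP : IIP rk) (rk_HTE : HTE rk) (rk_SI : SI rk).
Hypotheses (rk_MON : MON rk) (rk_RED : RED rk).

Lemma rk_trans A B C : rk A B -> rk B C -> rk A C.
Proof. apply (proj2 rk_ranking). Qed.

Lemma rk_equiv_trans A B C : rk_equiv rk A B -> rk_equiv rk B C -> rk_equiv rk A C.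
Proof. intros [] []; split; eapply rk_trans; eauto. Qed.

Lemma triad_equiv_centred T : psize T = 3%nat ->
  exists S, is_triad S 1 (mu T) 1 /\ rk_equiv rk T S.
Proof.
  intros Hs; pose proof (is_triad_pent T Hs) as HT.
  destruct (triad_pos _ _ _ _ HT) as (p1 & p2 & p3).
  set (t1 := pent T 0 1) in *; set (t2 := pent T 0 2) in *; set (t3 := pent T 1 2) in *.
  set (k := / t1); set (y := t2 / (t1 * t3)).
  assert (pk : 0 < k) by (apply Rinv_0_lt_compat; auto).
  assert (py : 0 < y) by (apply Rdiv_lt_0_compat; nra).
  assert (Hmu : mu T = Rmax (/ y) y).
  { rewrite (mu_triad _ _ _ _ HT); unfold triad_index, y; f_equal; field; lra. }
  assert (q2 : 0 < k * k * t2) by (repeat apply Rmult_lt_0_compat; auto).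
  assert (q3 : 0 < k * t3) by (apply Rmult_lt_0_compat; auto).
  destruct (triad_exists (k * t1) (k * k * t2) (k * t3)) as [T1 HT1]; auto.
  { apply Rmult_lt_0_compat; auto. }
  assert (E1 : rk_equiv rk T T1) by (apply (rk_SI t1 t2 t3 k); auto).
  destruct (triad_exists 1 y 1) as [T2 HT2]; try lra.
  assert (E2 : rk_equiv rk T1 T2).
  { apply (rk_HTE (k * k * t2) (k * t3)); auto.
    - replace 1 with (k * t1) by (unfold k; field; lra); exact HT1.
    - replace (k * k * t2 / (k * t3)) with y by (unfold y, k; field; lra); exact HT2. }
  destruct (Rle_dec 1 y) as [Hy|Hy].
  - exists T2; split; [now rewrite Hmu, Rmax_inv_l|].
    eapply rk_equiv_trans; eauto.
  - assert (Hy' : 1 <= / y) by (rewrite <- Rinv_1; apply Rinv_le_contravar; lra).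
    destruct (triad_exists (/ 1) (/ y) (/ 1)) as [T3 HT3];
      try apply Rinv_0_lt_compat; try lra.
    exists T3; split.
    + rewrite Hmu, Rmax_comm, <- (Rinv_inv y) at 1; rewrite Rmax_inv_l, <- Rinv_1; auto.
    + do 2 (eapply rk_equiv_trans; eauto); eapply rk_IIP; eauto.
Qed.

Lemma rk_triads_iff T T' : psize T = 3%nat -> psize T' = 3%nat ->
  rk T T' <-> mu T <= mu T'.
Proof.
  intros Hs Hs'.
  destruct (triad_equiv_centred T Hs) as [S [HS [E1 E2]]].
  destruct (triad_equiv_centred T' Hs') as [S' [HS' [E1' E2']]].
  pose proof (rk_PR _ _ _ _ (mu_ge1 T) (mu_ge1 T') HS HS') as HPR.
  split; intros H.
  - apply HPR; eapply rk_trans; [eauto|]; eapply rk_trans; eauto.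
  - apply HPR in H; eapply rk_trans; [eauto|]; eapply rk_trans; eauto.
Qed.

Lemma rk_equiv_triad_mu A T : triad_of T A -> rk_equiv rk A T -> mu A = mu T.
Proof.
  intros HT [HAT HTA].
  destruct (triad_of_attaining_mu A) as [U [HU HmuU]].
  assert (HUT : rk U T) by (eapply rk_trans; [apply rk_MON, HU | exact HAT]).
  apply rk_triads_iff in HUT; [| apply HU | apply HT].
  pose proof (mu_triad_of_le T A HT); lra.
Qed.

Lemma rk_koczkodaj A B : rk A B <-> koczkodaj_ranking A B.
Proof.
  destruct (rk_RED A) as [TA [HA [EA1 EA2]]], (rk_RED B) as [TB [HB [EB1 EB2]]].
  unfold koczkodaj_ranking.
  rewrite (rk_equiv_triad_mu A TA), (rk_equiv_triad_mu B TB) by (auto; split; auto).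
  rewrite <- rk_triads_iff by (apply HA || apply HB).
  split; intros H; repeat (eapply rk_trans; eauto).
Qed.

End Characterisation.

Theorem theorem1 (rk : PCM -> PCM -> Prop) :
  inconsistency_ranking rk ->
  ((PR rk /\ IIP rk /\ HTE rk /\ SI rk /\ MON rk /\ RED rk) <->
   (forall A B : PCM, rk A B <-> koczkodaj_ranking A B)).
Proof.
  intros Hrk; split.
  - intros (HPR & HIIP & HHTE & HSI & HMON & HRED).
    exact (rk_koczkodaj rk Hrk HPR HIIP HHTE HSI HMON HRED).
  - intros HK.
    exact (conj (koczkodaj_PR rk HK) (conj (koczkodaj_IIP rk HK) (conj (koczkodaj_HTE rk HK)
      (conj (koczkodaj_SI rk HK) (conj (koczkodaj_MON rk HK) (koczkodaj_RED rk HK)))))).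
Qed.
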